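(* Let $m,n\ge1$, let $g_{12}$ be an arbitrary complex $2m\times 2n$ matrix, and put $g_{21}=-U_{2n}J_{2n}g_{12}^{\tau}J_{2m}U_{2m}$ (equivalently, $g_{21}$ is an arbitrary $2n\times2m$ matrix and $g_{12}$ is determined from this relation). Let $G(\lambda)$, $\theta(\lambda)$, $\widehat u(\lambda)$, $u(\mu)$ be as defined in the context. Then, as rational functions of $\lambda=(\lambda_1,\lambda_2)$ and $\mu=(\mu_1,\mu_2)$, $$\mathrm{i}(\lambda_1-\mu_1)^{-1}u(\mu)P_1\widehat u(\lambda)=\mathrm{i}(\lambda_2-\mu_2)^{-1}u(\mu)P_2\widehat u(\lambda),$$ i.e. the function $\omega(\lambda,\mu):=\mathrm{i}(\lambda_p-\mu_p)^{-1}u(\mu)P_p\widehat u(\lambda)$ is the same for $p=1$ and $p=2$.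
   Context: $\mathrm{i}$ is the imaginary unit, $I_r$ the $r\times r$ identity, $\mathbf 1_r$ the all-ones column of length $r$, $^\tau$ transpose. For $N\ge1$, $\mathcal{A}^{(N)}=\{a_{j-\ell}\}_{j,\ell=1}^N$ with $a_r=0$ ($r<0$), $a_0=\mathrm{i}/2$, $a_r=\mathrm{i}$ ($r>0$); $\mathcal A_1=\mathcal A^{(n)}$, $\mathcal A_2=\mathcal A^{(m)}$. $U_{2N}$ is the $2N\times 2N$ matrix with ones on the antidiagonal and zeros elsewhere; $J_{2N}=\mathrm{diag}\{I_N,-I_N\}$. $P_1=\mathrm{diag}\{I_{2m},0_{2n}\}$, $P_2=I_{2(m+n)}-P_1$. $$G(\lambda)=\begin{bmatrix}\mathrm{diag}\{\mathcal A_2-\lambda_2I_m,\mathcal A_2-\lambda_2I_m\}&g_{12}\\ g_{21}&\mathrm{diag}\{\mathcal A_1-\lambda_1I_n,\mathcal A_1-\lambda_1I_n\}\end{bmatrix}.$$ $\theta(\lambda)$ is the polynomial with $\theta^2=\det G$ and coefficient of $\lambda_1^n\lambda_2^m$ equal to $-1$. Then $\widehat u(\lambda)=-\mathrm{i}(\lambda_1-\frac{\mathrm{i}}2)^{-n}(\lambda_2-\frac{\mathrm{i}}2)^{-m}\theta(\lambda)G(\lambda)^{-1}\mathrm{col}[0,\mathbf 1_m,0,\mathbf 1_n]$ (zero blocks of heights $m$ and $n$) and $u(\mu)=\big(\frac{\mu_1-\mathrm{i}/2}{\mu_1+\mathrm{i}/2}\big)^n\big(\frac{\mu_2-\mathrm{i}/2}{\mu_2+\mathrm{i}/2}\big)^m\widehat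 u(\mu)^{\tau}\mathrm{diag}\{J_{2m}U_{2m},J_{2n}U_{2n}\}$. *)

From HB Require Import structures.
From mathcomp Require Import all_boot all_order all_algebra.
From mathcomp Require Import complex.
From mathcomp Require Import reals.
Set Implicit Arguments. Unset Strict Implicit. Unset Printing Implicit Defensive.
Import Order.TTheory GRing.Theory Num.Theory.
Local Open Scope ring_scope.

Definition iC (R : realType) : R[i] := Complex 0 1.

Definition Amat (R : realType) (N : nat) : 'M[R[i]]_N :=
  \matrix_(j < N, l < N)
     (if (j < l)%N then 0 else if j == l :> nat then iC R / 2 else iC R).

Definition Umat (K : pzRingType) (N : nat) : 'M[K]_(N + N) :=
  \matrix_(j < N + N, l < N + N) (if (j + l == (N + N).-1)%N then 1 else 0).

Definition Jmat (K : pzRingType) (N : nat) : 'M[K]_(N + N) :=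
  block_mx 1%:M 0 0 (- 1%:M).

Definition dblock (K : pzRingType) (N : nat) (X : 'M[K]_N) : 'M[K]_(N + N) :=
  block_mx X 0 0 X.

Definition g21of (K : pzRingType) (m n : nat) (g12 : 'M[K]_(m + m, n + n))
  : 'M[K]_(n + n, m + m) :=
  - (Umat K n *m Jmat K n *m g12^T *m Jmat K m *m Umat K m).

Definition Gmat (K : pzRingType) (m n : nat) (A1 : 'M[K]_n) (A2 : 'M[K]_m)
  (g12 : 'M[K]_(m + m, n + n)) (l1 l2 : K) : 'M[K]_((m + m) + (n + n)) :=
  block_mx (dblock (A2 - l2%:M)) g12 (g21of g12) (dblock (A1 - l1%:M)).

Definition Gc (R : realType) (m n : nat) (g12 : 'M[R[i]]_(m + m, n + n))
  (l1 l2 : R[i]) := Gmat (Amat R n) (Amat R m) g12 l1 l2.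

(* Bivariate polynomials in (lambda1, lambda2): outer variable = lambda1,
   inner variable = lambda2. *)
Definition cst2 (R : realType) (x : R[i]) : {poly {poly R[i]}} := x%:P%:P.
Definition Lam1 (R : realType) : {poly {poly R[i]}} := 'X.
Definition Lam2 (R : realType) : {poly {poly R[i]}} := ('X : {poly R[i]})%:P.

Definition Gpoly (R : realType) (m n : nat) (g12 : 'M[R[i]]_(m + m, n + n)) :=
  Gmat (map_mx (@cst2 R) (Amat R n)) (map_mx (@cst2 R) (Amat R m))
       (map_mx (@cst2 R) g12) (Lam1 R) (Lam2 R).

Definition eval2 (R : realType) (p : {poly {poly R[i]}}) (l1 l2 : R[i]) : R[i] :=
  (p.[l1%:P]).[l2].

Definition coef2 (R : realType) (p : {poly {poly R[i]}}) (a b : nat) : R[i] :=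
  (p`_a)`_b.

Definition ecol (K : pzRingType) (m n : nat) : 'cV[K]_((m + m) + (n + n)) :=
  col_mx (col_mx 0 (const_mx 1)) (col_mx 0 (const_mx 1)).

Definition uhat (R : realType) (m n : nat) (g12 : 'M[R[i]]_(m + m, n + n))
  (theta : {poly {poly R[i]}}) (l1 l2 : R[i]) : 'cV[R[i]]_((m + m) + (n + n)) :=
  (- iC R * (l1 - iC R / 2) ^- n * (l2 - iC R / 2) ^- m * eval2 theta l1 l2)
    *: (invmx (Gc g12 l1 l2) *m ecol _ m n).

Definition urow (R : realType) (m n : nat) (g12 : 'M[R[i]]_(m + m, n + n))
  (theta : {poly {poly R[i]}}) (m1 m2 : R[i]) : 'rV[R[i]]_((m + m) + (n + n)) :=
  (((m1 - iC R / 2) / (m1 + iC R / 2)) ^+ n * ((m2 - iC R / 2) / (m2 + iC R / 2)) ^+ m)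
    *: ((uhat g12 theta m1 m2)^T
        *m block_mx (Jmat _ m *m Umat _ m) 0 0 (Jmat _ n *m Umat _ n)).

Definition P1 (K : pzRingType) (m n : nat) : 'M[K]_((m + m) + (n + n)) :=
  block_mx 1%:M 0 0 0.
Definition P2 (K : pzRingType) (m n : nat) : 'M[K]_((m + m) + (n + n)) :=
  1%:M - P1 K m n.

From HB Require Import structures.
From mathcomp Require Import all_boot all_order all_algebra.
From mathcomp Require Import complex.
From mathcomp Require Import reals.
From mathcomp Require Import zify.
Set Implicit Arguments. Unset Strict Implicit. Unset Printing Implicit Defensive.
Import Order.TTheory GRing.Theory Num.Theory.
Local Open Scope ring_scope.

(* Put W := J U.  Since A^{(N)} - λ is persymmetric (it is Toeplitz) and g21 is the
   W-conjugate of g12^τ, the skew matrix D := diag{W_{2m}, -W_{2n}} makes D G(λ) skew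
   for every λ.  If G(λ) x = e = G(μ) y, skewness of D G(λ) and of D G(μ) gives
   y^τ D (G(μ) - G(λ)) x = 0, and G(μ) - G(λ) = diag{(λ2 - μ2) I, (λ1 - μ1) I}.
   As u(μ) and uhat(λ) are scalar multiples of y^τ diag{W_{2m}, W_{2n}} and x, this is
   the claimed identity. *)

Section ExchangeMatrix.
Variable K : comPzRingType.

Definition exmx N : 'M[K]_N :=
  \matrix_(i < N, j < N) (if (i + j == N.-1)%N then 1 else 0).

Lemma mul_exmxE N p (B : 'M[K]_(N, p)) i k : (exmx N *m B) i k = B (rev_ord i) k.
Proof.
rewrite !mxE (bigD1 (rev_ord i)) //= mxE.
have -> : (i + (N - i.+1) == N.-1)%N by apply/eqP; have := ltn_ord i; lia.
rewrite mul1r big1 ?addr0 // => j ji; rewrite mxE.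
case: eqP => [ij|]; last by rewrite mul0r.
by case/eqP: ji; apply/val_inj => /=; move: ij; have := ltn_ord i; have := ltn_ord j; lia.
Qed.

Lemma trmx_exmx N : (exmx N)^T = exmx N.
Proof. by apply/matrixP => i j; rewrite !mxE addnC. Qed.

Lemma mulmx_exmxE N p (B : 'M[K]_(p, N)) i k : (B *m exmx N) i k = B i (rev_ord k).
Proof. by rewrite -[B *m _]trmxK trmx_mul trmx_exmx mxE mul_exmxE mxE. Qed.

Lemma exmx_sqr N : exmx N *m exmx N = 1%:M.
Proof.
apply/matrixP => i j; rewrite mul_exmxE !mxE /=.
have -> : (N - i.+1 + j == N.-1)%N = (i == j).
  apply/eqP/eqP => [ij|-> /=]; last by have := ltn_ord j; lia.
  by apply/val_inj => /=; move: ij; have := ltn_ord i; have := ltn_ord j; lia.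
by case: eqP.
Qed.

Lemma Umat_block N : Umat K N = block_mx 0 (exmx N) (exmx N) 0.
Proof.
apply/matrixP => i j; rewrite -(splitK i) -(splitK j).
case: (split i) => i'; case: (split j) => j';
rewrite /= ?block_mxEul ?block_mxEur ?block_mxEdl ?block_mxEdr !mxE /=;
have := ltn_ord i'; have := ltn_ord j' => lt_j lt_i.
- by have -> : (i' + j' == (N + N).-1)%N = false by apply/negbTE/eqP; lia.
- by congr (if _ then _ else _); apply/eqP/eqP; lia.
- by congr (if _ then _ else _); apply/eqP/eqP; lia.
- by have -> : (N + i' + (N + j') == (N + N).-1)%N = false by apply/negbTE/eqP; lia.
Qed.

Definition persymmetric N (X : 'M[K]_N) := exmx N *m X = X^T *m exmx N.

Lemma persymmetricB_scalar N (X : 'M[K]_N) a :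
  persymmetric X -> persymmetric (X - a%:M).
Proof.
rewrite /persymmetric => symX.
by rewrite mulmxBr symX linearB /= tr_scalar_mx mulmxBl mul_mx_scalar mul_scalar_mx.
Qed.

End ExchangeMatrix.

Section SkewBlocks.
Variable K : comPzRingType.

Definition Wmx N : 'M[K]_(N + N) := Jmat K N *m Umat K N.

Lemma Wmx_block N : Wmx N = block_mx 0 (exmx K N) (- exmx K N) 0.
Proof.
rewrite /Wmx /Jmat Umat_block mulmx_block.
by rewrite !mul1mx !mul0mx !mulNmx !mul1mx !addr0 !add0r oppr0.
Qed.

Lemma Umat_mul_Jmat N : Umat K N *m Jmat K N = - Wmx N.
Proof.
rewrite Wmx_block /Jmat Umat_block mulmx_block opp_block_mx.
by rewrite !mulmx1 !mulmx0 !mulmxN !mulmx1 !addr0 !add0r !oppr0 opprK.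
Qed.

Lemma trmx_Wmx N : (Wmx N)^T = - Wmx N.
Proof.
by rewrite Wmx_block tr_block_mx opp_block_mx !trmx0 oppr0 linearN /= trmx_exmx opprK.
Qed.

Lemma Wmx_sqr N : Wmx N *m Wmx N = - 1%:M.
Proof.
rewrite Wmx_block mulmx_block (scalar_mx_block N N) opp_block_mx.
by rewrite !mul0mx !mulmx0 !addr0 !add0r mulmxN mulNmx exmx_sqr oppr0.
Qed.

Lemma mulKWmx N p (B : 'M[K]_(N + N, p)) : Wmx N *m (Wmx N *m B) = - B.
Proof. by rewrite mulmxA Wmx_sqr mulNmx mul1mx. Qed.

Lemma mulmxKW N p (B : 'M[K]_(p, N + N)) : B *m Wmx N *m Wmx N = - B.
Proof. by rewrite -mulmxA Wmx_sqr mulmxN mulmx1. Qed.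

Lemma g21of_Wmx m n (g : 'M[K]_(m + m, n + n)) : g21of g = Wmx n *m g^T *m Wmx m.
Proof.
by rewrite /g21of -!mulmxA -/(Wmx m) !mulmxA Umat_mul_Jmat !mulNmx opprK.
Qed.

Lemma Wmx_dblock N (X : 'M[K]_N) :
  persymmetric X -> Wmx N *m dblock X = (dblock X)^T *m Wmx N.
Proof.
move=> symX; rewrite Wmx_block /dblock tr_block_mx !trmx0 !mulmx_block.
by rewrite !mul0mx !mulmx0 !add0r !addr0 mulNmx symX mulmxN.
Qed.

Definition Gform m n : 'M[K]_((m + m) + (n + n)) :=
  block_mx (Wmx m) 0 0 (- Wmx n).

Definition Wdiag m n : 'M[K]_((m + m) + (n + n)) := block_mx (Wmx m) 0 0 (Wmx n).

Lemma trmx_Gform m n : (Gform m n)^T = - Gform m n.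
Proof.
by rewrite /Gform tr_block_mx !trmx0 linearN /= !trmx_Wmx opp_block_mx !oppr0.
Qed.

Lemma Gform_Gmat m n (A1 : 'M[K]_n) (A2 : 'M[K]_m) g l1 l2 :
  persymmetric A1 -> persymmetric A2 ->
  Gform m n *m Gmat A1 A2 g l1 l2 = (Gmat A1 A2 g l1 l2)^T *m Gform m n.
Proof.
move=> symA1 symA2; rewrite /Gmat g21of_Wmx /Gform tr_block_mx !mulmx_block.
rewrite !mul0mx !mulmx0 !addr0 !add0r !mulNmx !mulmxN.
have symX1 := persymmetricB_scalar l1 symA1.
have symX2 := persymmetricB_scalar l2 symA2.
rewrite (Wmx_dblock symX1) (Wmx_dblock symX2); congr block_mx.
  rewrite trmx_mul trmx_Wmx trmx_mul trmxK trmx_Wmx.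
  rewrite !(mulmxN, mulNmx) !opprK -[Wmx m *m _ *m Wmx n]mulmxA.
  by rewrite mulmxKW mulmxN opprK.
by rewrite -[Wmx n *m g^T *m _]mulmxA mulKWmx opprK.
Qed.

Lemma Gform_Gmat_skew m n (A1 : 'M[K]_n) (A2 : 'M[K]_m) g l1 l2 :
  persymmetric A1 -> persymmetric A2 ->
  (Gform m n *m Gmat A1 A2 g l1 l2)^T = - (Gform m n *m Gmat A1 A2 g l1 l2).
Proof.
by move=> symA1 symA2; rewrite trmx_mul trmx_Gform mulmxN Gform_Gmat.
Qed.

Lemma Gmat_sub m n (A1 : 'M[K]_n) (A2 : 'M[K]_m) g l1 l2 mu1 mu2 :
  Gmat A1 A2 g mu1 mu2 - Gmat A1 A2 g l1 l2
  = block_mx (l2 - mu2)%:M 0 0 (l1 - mu1)%:M.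
Proof.
rewrite /Gmat /dblock !(opp_block_mx, add_block_mx) !subrr.
rewrite (scalar_mx_block m m) (scalar_mx_block n n).
have shiftB N (A : 'M[K]_N) a b : A - a%:M - (A - b%:M) = (b - a)%:M.
  by rewrite [RHS]raddfB /= opprB addrC addrA subrK.
by rewrite !shiftB.
Qed.

Lemma Gform_scalar_block m n (a b : K) :
  Gform m n *m block_mx a%:M 0 0 b%:M
  = a *: (Wdiag m n *m P1 K m n) - b *: (Wdiag m n *m P2 K m n).
Proof.
rewrite /P2 /P1 (scalar_mx_block (m + m) (n + n)) opp_block_mx add_block_mx.
rewrite /Gform /Wdiag !mulmx_block !(mulmx0, mul0mx, subrr, subr0, addr0, add0r).
rewrite !(scale_block_mx, opp_block_mx, add_block_mx, scaler0, oppr0, addr0).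
by rewrite !(mulmx1, mul_mx_scalar, mulNmx, scalerN) add0r.
Qed.

End SkewBlocks.

Section SkewForms.
Variable K : comUnitRingType.
Hypothesis two_unit : (2%:R : K) \is a GRing.unit.

Lemma skew_quad_form0 N (M : 'M[K]_N) (v : 'cV[K]_N) : M^T = - M -> v^T *m M *m v = 0.
Proof.
move=> skM; set s := _ *m _ *m v.
have s_skew : s^T = - s.
  by rewrite /s !trmx_mul trmxK skM mulNmx mulmxN mulmxA.
have s_sym : s^T = s by apply/matrixP => i j; rewrite !ord1 mxE.
have s2 : s *+ 2 = 0 by rewrite mulr2n -{1}s_sym s_skew addNr.
by rewrite -[s]scale1r -(mulVr two_unit) -scalerA scaler_nat s2 scaler0.
Qed.

Lemma skew_solutions_orth N (D G1 G2 : 'M[K]_N) (e x y : 'cV[K]_N) :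
  (D *m G1)^T = - (D *m G1) -> (D *m G2)^T = - (D *m G2) ->
  G1 *m x = e -> G2 *m y = e -> y^T *m (D *m (G2 - G1)) *m x = 0.
Proof.
move=> skew1 skew2 G1x G2y.
have cross1 : y^T *m (D *m G1) *m x = 0.
  by rewrite -mulmxA -(mulmxA D) G1x -G2y (mulmxA D) mulmxA skew_quad_form0.
have cross2 : y^T *m (D *m G2) *m x = 0.
  apply: trmx_inj; rewrite trmx0 trmx_mul trmx_mul trmxK skew2 mulNmx mulmxN.
  by rewrite -(mulmxA D) G2y -G1x (mulmxA D) mulmxA skew_quad_form0 ?oppr0.
by rewrite mulmxBr mulmxBr mulmxBl cross1 cross2 subrr.
Qed.

Lemma Gmat_resolvent_identity m n (A1 : 'M[K]_n) (A2 : 'M[K]_m) g l1 l2 mu1 mu2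
    (e x y : 'cV[K]_((m + m) + (n + n))) :
  persymmetric A1 -> persymmetric A2 ->
  Gmat A1 A2 g l1 l2 *m x = e -> Gmat A1 A2 g mu1 mu2 *m y = e ->
  (l2 - mu2) *: (y^T *m (Wdiag K m n *m P1 K m n) *m x)
  = (l1 - mu1) *: (y^T *m (Wdiag K m n *m P2 K m n) *m x).
Proof.
move=> symA1 symA2 Gx Gy.
have := skew_solutions_orth (Gform_Gmat_skew g l1 l2 symA1 symA2)
  (Gform_Gmat_skew g mu1 mu2 symA1 symA2) Gx Gy.
rewrite Gmat_sub Gform_scalar_block mulmxBr mulmxBl -!scalemxAr -!scalemxAl.
by move/eqP; rewrite subr_eq0 => /eqP.
Qed.

End SkewForms.

Lemma Amat_persymmetric (R : realType) N : persymmetric (Amat R N).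
Proof.
apply/matrixP => i k; rewrite mul_exmxE mulmx_exmxE !mxE /=.
have lt_i := ltn_ord i; have lt_k := ltn_ord k.
have -> : (N - i.+1 < k)%N = (N - k.+1 < i)%N by apply/idP/idP; lia.
have -> : (N - i.+1 == k)%N = (N - k.+1 == i)%N by apply/eqP/eqP; lia.
done.
Qed.

Lemma scale_div_cross (F : fieldType) (V : lmodType F) (a b c : F) (u v : V) :
  a != 0 -> b != 0 -> b *: u = a *: v -> (c / a) *: u = (c / b) *: v.
Proof.
move=> a0 b0 buav; rewrite -!scalerA; congr (c *: _).
by rewrite -{1}[u](scalerK b0) buav scalerA mulrC -scalerA scalerK.
Qed.

Lemma scaled_form_div_cross (F : fieldType) N (a b c cu cy cx : F)
    (y x : 'cV[F]_N) (W P1 P2 : 'M[F]_N) :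
  a != 0 -> b != 0 ->
  b *: (y^T *m (W *m P1) *m x) = a *: (y^T *m (W *m P2) *m x) ->
  (c / a) *: ((cu *: ((cy *: y)^T *m W)) *m P1 *m (cx *: x))
  = (c / b) *: ((cu *: ((cy *: y)^T *m W)) *m P2 *m (cx *: x)).
Proof.
move=> a0 b0 key; apply: scale_div_cross a0 b0 _.
have pull P : (cu *: ((cy *: y)^T *m W)) *m P *m (cx *: x)
    = (cu * cy * cx) *: (y^T *m (W *m P) *m x).
  by rewrite [(cy *: y)^T]linearZ /= -!scalemxAl -!scalemxAr !scalerA !mulmxA mulrAC.
by rewrite !pull !scalerA ![_ * (cu * cy * cx)]mulrC -!scalerA key.
Qed.

Theorem lemma3p1 (R : realType) (m n : nat) (m_gt0 : (0 < m)%N) (n_gt0 : (0 < n)%N)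
  (g12 : 'M[R[i]]_(m + m, n + n)) (theta : {poly {poly R[i]}})
  (Htheta2 : theta ^+ 2 = \det (Gpoly g12))
  (Hthetac : coef2 theta n m = -1)
  (l1 l2 mu1 mu2 : R[i])
  (Hl1 : l1 != mu1) (Hl2 : l2 != mu2)
  (HGl : \det (Gc g12 l1 l2) != 0) (HGmu : \det (Gc g12 mu1 mu2) != 0)
  (Hl1i : l1 != iC R / 2) (Hl2i : l2 != iC R / 2)
  (Hm1i : mu1 != iC R / 2) (Hm2i : mu2 != iC R / 2)
  (Hm1i' : mu1 != - (iC R / 2)) (Hm2i' : mu2 != - (iC R / 2)) :
  (iC R / (l1 - mu1)) *: (urow g12 theta mu1 mu2 *m P1 _ m n *m uhat g12 theta l1 l2)
  = (iC R / (l2 - mu2)) *: (urow g12 theta mu1 mu2 *m P2 _ m n *m uhat g12 theta l1 l2).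
Proof.
have unitG a b : \det (Gc g12 a b) != 0 -> Gc g12 a b \in unitmx.
  by move=> detG; rewrite unitmxE unitfE.
have two_unit : (2%:R : R[i]) \is a GRing.unit by rewrite unitfE pnatr_eq0.
have key := Gmat_resolvent_identity two_unit
  (Amat_persymmetric R n) (Amat_persymmetric R m)
  (mulKVmx (unitG _ _ HGl) (ecol _ m n)) (mulKVmx (unitG _ _ HGmu) (ecol _ m n)).
rewrite /urow /uhat; apply: scaled_form_div_cross key; by rewrite subr_eq0.
Qed.
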